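(* Assume (A1) and (A5). Then: (1) For every $1\le i\le n$ and all $\xi,\eta\in\mathscr C$ with $\xi^i(0)-D^i(\xi)=\eta^i(0)-D^i(\eta)$, there exists $\zeta\in\mathscr C$ with $\zeta\le\xi\wedge\eta$ and $\zeta^i(0)-D^i(\zeta)=\xi^i(0)-D^i(\xi)=\eta^i(0)-D^i(\eta)$. (2) For all $\mu,\nu\in\mathscr P_2(\mathscr C)$ there exists $\tilde\mu\in\mathscr P_2(\mathscr C)$ with $\tilde\mu\le_D\mu$ and $\tilde\mu\le_D\nu$.
   Context: Fix $n\ge1$, $r_0>0$, $\mathscr C=C([-r_0,0];\mathbb R^n)$ with $\|h\|_\infty=\sup_\theta|h(\theta)|$; $\mathscr P_2(\mathscr C)$ the probability measures on $\mathscr C$ with finite second moment of $\|\cdot\|_\infty$. $D:\mathscr C\to\mathbb R^n$; superscript $i$ denotes the $i$-th coordinate. Order: for $\xi,\eta\in\mathscr C$, $\xi\le\eta$ iff $\xi(\theta)\le\eta(\theta)$ coordinatewise for all $\theta\in[-r_0,0]$; $(\xi\wedge\eta)_i=\xi_i\wedge\eta_i$ pointwise; $\xi\le_D\eta$ iff $\xi\le\eta$ and $\xi(0)-D(\xi)\le\eta(0)-D(\eta)$ (coordinatewise in $\mathbb R^n$). $f:\mathscr C\to\mathbb R$ is $D$-increasing if $\xi\le_D\eta\Rightarrow f(\xi)\le f(\eta)$; for probability measures, $\mu\le_D\nu$ iff $\mu(f)\le\nu(f)$ for all bounded measurable $D$-increasing $f$. (A1) $D(0)=0$ and $D(\xi)\ge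 D(\eta)$ whenever $\xi\ge\eta$. (A5) There is $\kappa\in(0,1)$ with $|D(\xi)-D(\eta)|\le\kappa\max_{1\le i\le n}\|\xi^i-\eta^i\|_\infty$. *)

From HB Require Import structures.
From mathcomp Require Import all_boot all_order all_algebra.
From mathcomp Require Import all_classical all_reals all_analysis.
Set Implicit Arguments. Unset Strict Implicit. Unset Printing Implicit Defensive.
Import Order.TTheory GRing.Theory Num.Theory numFieldNormedType.Exports.
Local Open Scope classical_set_scope.
Local Open Scope ring_scope.

Section Defs.
Variables (R : realType) (n : nat) (r0 : R).

Definition Iint : set R := `[- r0, 0]%classic.

(* clamp t into [-r0,0]; used to make the representation of C canonical *)
Definition clamp (t : R) : R := Num.max (- r0) (Num.min 0 t).

Definition eucl (x : 'I_n -> R) : R := Num.sqrt (\sum_(i < n) x i ^+ 2).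

(* membership in C([-r0,0];R^n): each coordinate continuous on [-r0,0];
   values outside [-r0,0] are fixed by clamping, so that elements of C are
   exactly the continuous functions on [-r0,0]. *)
Definition isC (h : 'I_n -> R -> R) : Prop :=
  (forall i, {within Iint, continuous (h i : R -> R)}) /\
  (forall i t, h i t = h i (clamp t)).

Definition C := {h : 'I_n -> R -> R | isC h}.

HB.instance Definition _ := gen_eqMixin C.
HB.instance Definition _ := gen_choiceMixin C.

Lemma isC0 : isC (fun _ _ => 0).
Proof. by split => // i; apply: continuous_subspaceT => x; apply: cst_continuous. Qed.

Definition C0 : C := exist _ _ isC0.
HB.instance Definition _ := isPointed.Build C C0.

Definition ev (h : C) (i : 'I_n) (t : R) : R := proj1_sig h i t.

Definition supn (h : C) : R := sup [set eucl (fun i => ev h i t) | t in Iint].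
Definition supd (x y : C) : R :=
  sup [set eucl (fun i => ev x i t - ev y i t) | t in Iint].
Definition supdi (i : 'I_n) (x y : C) : R :=
  sup [set `|ev x i t - ev y i t| | t in Iint].

Definition openC : set (set C) :=
  [set A | forall x, A x -> exists2 e : R, 0 < e & forall y, supd x y < e -> A y].
Definition Cm := g_sigma_algebraType openC.

Definition leC (x y : C) : Prop := forall i t, Iint t -> ev x i t <= ev y i t.
Definition le_meet (z x y : C) : Prop :=
  forall i t, Iint t -> ev z i t <= Num.min (ev x i t) (ev y i t).

Variable D : C -> 'I_n -> R.
Definition Dres (x : C) (i : 'I_n) : R := ev x i 0 - D x i.
Definition leD (x y : C) : Prop := leC x y /\ forall i, Dres x i <= Dres y i.

Definition D_increasing (f : C -> R) : Prop := forall x y, leD x y -> f x <= f y.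

Definition bounded_measurable (f : Cm -> R) : Prop :=
  measurable_fun setT f /\ exists M : R, forall x, `|f x| <= M.

Definition leDmeas (mu nu : probability Cm R) : Prop :=
  forall f : Cm -> R, bounded_measurable f -> D_increasing f ->
    (\int[mu]_x (f x)%:E <= \int[nu]_x (f x)%:E)%E.

Definition P2 (mu : probability Cm R) : Prop :=
  (\int[mu]_x ((supn x) ^+ 2)%:E < +oo)%E.

Definition A1 : Prop :=
  (forall i, D C0 i = 0) /\ (forall x y, leC y x -> forall i, D y i <= D x i).
Definition A5 : Prop :=
  exists2 kappa : R, 0 < kappa < 1 &
    forall x y, eucl (fun i => D x i - D y i) <= kappa * \big[Num.max/0]_(i < n) supdi i x y.

End Defs.

From Pilot Require Import Defs.
From HB Require Import structures.
From mathcomp Require Import all_boot all_order all_algebra.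
From mathcomp Require Import all_classical all_reals all_analysis.
From mathcomp Require Import ring lra.
From mathcomp Require Import measurable_realfun.
Import Order.TTheory GRing.Theory Num.Theory numFieldNormedType.Exports.
Import archimedean.Num.Def archimedean.Num.Theory.
Local Open Scope classical_set_scope.
Local Open Scope ring_scope.
Set Implicit Arguments. Unset Strict Implicit. Unset Printing Implicit Defensive.

(* Write |x| for max_i ||x^i||_oo and let k < 1 be the constant of (A5).
   (1) Lower the pointwise minimum x /\ y by a constant s >= 0. This lowers the
   i-th coordinate at 0 by s but, by (A5), moves D^i by at most k s; so
   s |-> (x /\ y - s)^i(0) - D^i(x /\ y - s) is continuous, it dominates the
   common value at s = 0 (by (A1), since x /\ y <= x, y) and it decreases at
   rate at least 1 - k > 0. The intermediate value theorem gives the shift.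
   (2) For the same reason the constant path -c is D-below x as soon as
   (1 + k) |x| <= (1 - k) c. Choosing for c a natural number just above
   (1 + k)/(1 - k) (|x| + |y|) gives a measurable map phi with
   phi(x, y) <=_D x, y, and the image of mu (x) nu under phi works: its second
   moment is controlled by those of mu and nu. *)

Section integral_complements.
Local Open Scope ereal_scope.
Context d (T : measurableType d) (R : realType).

(* No measurability is needed: the integral of a nonnegative function is a
   supremum over the simple functions below it. *)
Lemma ge0_le_integral_nomeas (mu : {measure set T -> \bar R}) (f g : T -> \bar R) :
  (forall x, 0 <= f x) -> (forall x, f x <= g x) -> \int[mu]_x f x <= \int[mu]_x g x.
Proof.
move=> f0 fg; have g0 x : 0 <= g x := le_trans (f0 x) (fg x).
have nege0 (h : T -> \bar R) : (forall x, 0 <= h x) -> h^\- = cst 0.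
  by move=> h0; apply/funext => x; apply: (ge0_funenegE (D := setT)); rewrite ?inE.
rewrite /integral !patch_setT (nege0 f f0) (nege0 g g0); apply: leeB => //.
apply: ereal_sup_le => _ [h /= hf <-]; exists h => //= x.
by apply: le_trans (hf x) _; rewrite !funeposE le_max2.
Qed.

Lemma bounded_integrable (P : probability T R) (h : T -> R) (M : R) :
  measurable_fun setT h -> (forall x, `|h x| <= M)%R -> P.-integrable setT (EFin \o h).
Proof.
move=> mh hM; apply: measurable_bounded_integrable => //.
  exact: le_lt_trans (probability_le1 P measurableT) (ltry 1).
apply: filterS (nbhs_pinfty_ge (num_real M)) => M' MM' x _ /=.
exact: le_trans (hM x) MM'.
Qed.

End integral_complements.

Section distribution_comparison.
Local Open Scope ereal_scope.
Context d (T : measurableType d) d' (T' : measurableType d') (R : realType).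

Lemma le_integral_distribution (P : probability T' R)
    (X : {mfun T' >-> T}) (Y : T' -> T) (f : T -> R) (M : R) :
  measurable_fun setT Y -> measurable_fun setT f -> (forall x, `|f x| <= M)%R ->
  (forall p, f (X p) <= f (Y p))%R ->
  \int[distribution P X]_x (f x)%:E <= \int[P]_p (f (Y p))%:E.
Proof.
move=> mY mf fM fXY.
have mfE : measurable_fun setT (EFin \o f) by exact/measurable_EFinP.
have mfX : measurable_fun setT (f \o X) := measurableT_comp mf (measurable_funPT X).
have mfY : measurable_fun setT (f \o Y) := measurableT_comp mf mY.
rewrite integral_distribution //; last exact: bounded_integrable mfX (fun x => fM (X x)).
apply: le_integral => //.
- exact: bounded_integrable mfX (fun x => fM (X x)).
- exact: bounded_integrable mfY (fun x => fM (Y x)).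
- by move=> p _; rewrite lee_fin.
Qed.

End distribution_comparison.

Section product_marginals.
Local Open Scope ereal_scope.
Context d1 d2 (T1 : measurableType d1) (T2 : measurableType d2) (R : realType).
Variables (mu : probability T1 R) (nu : probability T2 R).

Let integral_cst_prob d (T : measurableType d) (P : probability T R) (c : \bar R) :
  \int[P]_x c = c.
Proof.
rewrite integral_cst // [X in (_ * X)%E](_ : _ = 1%E) ?mule1 //.
exact: probability_setT.
Qed.

Lemma ge0_integral_prod_fst (f : T1 -> \bar R) :
  measurable_fun setT f -> (forall x, 0 <= f x) ->
  \int[mu \x nu]_p f p.1 = \int[mu]_x f x.
Proof.
move=> mf f0; rewrite fubini_tonelli1 //; last exact: measurableT_comp.
by apply: eq_integral => x _; rewrite /fubini_F /= integral_cst_prob.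
Qed.

Lemma ge0_integral_prod_snd (f : T2 -> \bar R) :
  measurable_fun setT f -> (forall x, 0 <= f x) ->
  \int[mu \x nu]_p f p.2 = \int[nu]_x f x.
Proof.
move=> mf f0; rewrite fubini_tonelli2 //; last exact: measurableT_comp.
by apply: eq_integral => x _; rewrite /fubini_G /= integral_cst_prob.
Qed.

Lemma integral_prod_fst (f : T1 -> R) (M : R) :
  measurable_fun setT f -> (forall x, `|f x| <= M)%R ->
  \int[mu \x nu]_p (f p.1)%:E = \int[mu]_x (f x)%:E.
Proof.
move=> mf fM; rewrite -integral12_prod_meas1; last first.
  exact: bounded_integrable (measurableT_comp mf measurable_fst) (fun p => fM p.1).
by apply: eq_integral => x _; rewrite /fubini_F /= integral_cst_prob.
Qed.

Lemma integral_prod_snd (f : T2 -> R) (M : R) :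
  measurable_fun setT f -> (forall x, `|f x| <= M)%R ->
  \int[mu \x nu]_p (f p.2)%:E = \int[nu]_x (f x)%:E.
Proof.
move=> mf fM; rewrite -integral21_prod_meas1; last first.
  exact: bounded_integrable (measurableT_comp mf measurable_snd) (fun p => fM p.2).
by apply: eq_integral => x _; rewrite /fubini_G /= integral_cst_prob.
Qed.

End product_marginals.

Section eucl_bounds.
Variables (R : realType) (n : nat).
Implicit Types v : 'I_n -> R.

Lemma eucl_ge0 v : 0 <= eucl v.
Proof. exact: sqrtr_ge0. Qed.

Lemma coord_le_eucl v i : `|v i| <= eucl v.
Proof.
rewrite /eucl -sqrtr_sqr ler_sqrt; last by apply: sumr_ge0 => j _; exact: sqr_ge0.
by rewrite (bigD1 i) //= lerDl sumr_ge0 // => j _; exact: sqr_ge0.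
Qed.

Lemma eucl_le_sum v : eucl v <= \sum_i `|v i|.
Proof.
have S0 : 0 <= \sum_i `|v i| by apply: sumr_ge0.
rewrite /eucl -(ger0_norm S0) -sqrtr_sqr ler_sqrt ?sqr_ge0 //.
rewrite expr2 mulr_suml; apply: ler_sum => i _.
rewrite -real_normK ?num_real // expr2 ler_wpM2l //.
by rewrite (bigD1 i) //= lerDl sumr_ge0.
Qed.

Lemma eucl_le v M : (forall i, `|v i| <= M) -> eucl v ^+ 2 <= n%:R * M ^+ 2.
Proof.
move=> vM; rewrite sqr_sqrtr; last by apply: sumr_ge0 => i _; exact: sqr_ge0.
have vM2 i : v i ^+ 2 <= M ^+ 2.
  by rewrite -real_normK ?num_real // lerXn2r ?nnegrE // (le_trans (normr_ge0 _) (vM i)).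
by apply: le_trans (ler_sum _ (fun i _ => vM2 i)) _; rewrite sumr_const card_ord mulr_natl.
Qed.

End eucl_bounds.

Lemma lipschitz_continuous (R : realType) (g : R -> R) (L : R) : 0 < L ->
  (forall s s', `|g s - g s'| <= L * `|s - s'|) -> continuous g.
Proof.
move=> L0 gL x; apply/cvgrPdist_lt => e e0.
near=> z; apply: le_lt_trans (gL x z) _; rewrite -ltr_pdivlMl //.
near: z; apply: cvgr_dist_lt => //.
by rewrite mulr_gt0 // invr_gt0.
Unshelve. all: by end_near. Qed.

Section path_space.
Variables (R : realType) (n : nat) (r0 : R).
Hypothesis r0_gt0 : 0 < r0.
Local Notation CC := (C n r0).

Lemma Iint0 : Iint r0 0.
Proof. by rewrite /Iint /= in_itv /= lexx andbT oppr_le0 ltW. Qed.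

Lemma ev_bounded (h : CC) i : exists B, forall t, Iint r0 t -> `|ev h i t| <= B.
Proof.
have [h_cont _] : isC r0 (proj1_sig h) := proj2_sig h.
have le_r0 : - r0 <= 0 by rewrite oppr_le0 ltW.
have [c1 _ hmax] := EVT_max le_r0 (h_cont i).
have [c2 _ hmin] := EVT_min le_r0 (h_cont i).
exists (Num.max `|ev h i c1| `|ev h i c2|) => t It.
have {}It : t \in `[- r0, 0] by [].
have := hmax t It; have := hmin t It; rewrite /ev le_max => lo hi.
case: (lerP 0 (proj1_sig h i t)) => h0.
  by rewrite ger0_norm // (le_trans hi (ler_norm _)).
by rewrite ltr0_norm //; apply/orP; right; rewrite -normrN (le_trans _ (ler_norm _)) // lerN2.
Qed.

Lemma ev_bounded_all (h : CC) : exists B, forall i t, Iint r0 t -> `|ev h i t| <= B.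
Proof.
have [B hB] := choice (ev_bounded h).
exists (\big[Num.max/0]_i B i) => i t It.
exact: le_trans (hB i t It) (le_bigmax _ B i).
Qed.

Lemma has_ub_supd (x y : CC) :
  has_ubound [set eucl (fun i => ev x i t - ev y i t) | t in Iint r0].
Proof.
have [Bx hx] := ev_bounded_all x; have [By hy] := ev_bounded_all y.
exists (\sum_(i < n) (Bx + By)) => _ [t It <-].
apply: le_trans (eucl_le_sum _) _; apply: ler_sum => i _.
by apply: le_trans (ler_normB _ _) _; rewrite lerD ?hx ?hy.
Qed.

Lemma ev_dist_le_supd (x y : CC) i t : Iint r0 t -> `|ev x i t - ev y i t| <= supd x y.
Proof.
move=> It; apply: le_trans (coord_le_eucl (fun i => ev x i t - ev y i t) i) _.
by apply: ub_le_sup; [exact: has_ub_supd | exists t].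
Qed.

Lemma ev_dist_le_supdi (x y : CC) i t : Iint r0 t -> `|ev x i t - ev y i t| <= supdi i x y.
Proof.
move=> It; apply: ub_le_sup; last by exists t.
have [M hM] := has_ub_supd x y; exists M => _ [s Is <-].
apply: le_trans (coord_le_eucl (fun i => ev x i s - ev y i s) i) _.
by apply: hM; exists s.
Qed.

Lemma supdi_le (x y : CC) i M :
  (forall t, Iint r0 t -> `|ev x i t - ev y i t| <= M) -> supdi i x y <= M.
Proof.
move=> hM; apply: ge_sup; first by exists `|ev x i 0 - ev y i 0|, 0; first exact: Iint0.
by move=> _ [t It <-]; exact: hM.
Qed.

Lemma isC_cst (c : R) : isC r0 (fun (_ : 'I_n) _ => c).
Proof. by split => // i; apply: continuous_subspaceT => x; exact: cst_continuous. Qed.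

Definition cstC (c : R) : CC := exist _ _ (isC_cst c).

Lemma isC_meet_sub (x y : CC) (s : R) :
  isC r0 (fun i t => Num.min (ev x i t) (ev y i t) - s).
Proof.
have [x_cont x_clamp] : isC r0 (proj1_sig x) := proj2_sig x.
have [y_cont y_clamp] : isC r0 (proj1_sig y) := proj2_sig y.
split=> [i t|i t]; last by rewrite /ev x_clamp y_clamp.
have cst_s : {for t, continuous (fun _ : subspace (Iint r0) => s)} by exact: cvg_cst.
exact: continuousB (continuous_min (x_cont i t) (y_cont i t)) cst_s.
Qed.

Definition meetC (x y : CC) (s : R) : CC := exist _ _ (isC_meet_sub x y s).

Lemma ev_meetC (x y : CC) s i t : ev (meetC x y s) i t = Num.min (ev x i t) (ev y i t) - s.
Proof. by []. Qed.

Lemma supdi_meetC (x y : CC) s s' j : supdi j (meetC x y s) (meetC x y s') <= `|s - s'|.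
Proof.
apply: supdi_le => t _; rewrite !ev_meetC; set m := Num.min _ _.
by rewrite (_ : m - s - (m - s') = - (s - s')) ?normrN //; ring.
Qed.

End path_space.

Section max_norm.
Variables (R : realType) (n : nat) (r0 : R).
Hypothesis r0_gt0 : 0 < r0.
Local Notation CC := (C n r0).
Local Notation CM := (Cm n r0).

Definition maxnorm (x : CC) : R := \big[Num.max/0]_i supdi i x (C0 n r0).

Lemma maxnorm_ge0 (x : CC) : 0 <= maxnorm x.
Proof. exact: bigmax_ge_id. Qed.

Lemma ev_le_maxnorm (x : CC) i t : Iint r0 t -> `|ev x i t| <= maxnorm x.
Proof.
move=> It; have := ev_dist_le_supdi r0_gt0 x (C0 n r0) i It.
by rewrite /ev /= subr0 => /le_trans; apply; exact: le_bigmax.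
Qed.

Lemma maxnorm_le (x : CC) M :
  0 <= M -> (forall i t, Iint r0 t -> `|ev x i t| <= M) -> maxnorm x <= M.
Proof.
move=> M0 hM; apply: bigmax_le => // i _; apply: supdi_le => // t It.
by rewrite /ev /= subr0; exact: hM.
Qed.

Lemma maxnorm_cstC (c : R) : maxnorm (cstC n r0 c) <= `|c|.
Proof. by apply: maxnorm_le. Qed.

Lemma open_maxnorm_gt (a : R) : @Defs.openC R n r0 [set x : CC | a < maxnorm x].
Proof.
move=> x /= ax; have [a0|a0] := ltP a 0.
  by exists 1 => // y _; exact: lt_le_trans a0 (maxnorm_ge0 y).
have [j aj] : exists j, a < supdi j x (C0 n r0).
  apply: contrapT => aj; move: ax; apply/negP; rewrite -leNgt.
  apply: bigmax_le => // j _; rewrite leNgt; apply/negP => ajx; apply: aj; by exists j.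
have [_ [t It <-]] := sup_gt (ex_intro _ _ (ex_intro2 _ _ 0 (Iint0 r0_gt0) erefl)) aj.
rewrite /ev /= subr0 => a_xt.
exists (`|ev x j t| - a); first by rewrite subr_gt0.
move=> y xy /=; apply: lt_le_trans (ev_le_maxnorm y j It).
have := ev_dist_le_supd r0_gt0 x y j It.
have : `|ev x j t| <= `|ev x j t - ev y j t| + `|ev y j t|.
  by apply: le_trans (ler_normD _ _); rewrite subrK.
lra.
Qed.

Lemma measurable_maxnorm : measurable_fun [set: CM] (maxnorm : CM -> R).
Proof.
move=> _; apply: (measurability _ (RGenOInfty.measurableE R)) => //.
move=> /= _ [_ [a ->] <-]; rewrite preimage_itvoy setTI.
by apply: sub_sigma_algebra; exact: open_maxnorm_gt.
Qed.

Lemma eucl_le_supn (x : CC) t : Iint r0 t -> eucl (fun i => ev x i t) <= supn x.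
Proof.
move=> It; apply: ub_le_sup; last by exists t.
have [M hM] := has_ub_supd r0_gt0 x (C0 n r0); exists M => _ [s Is <-].
by apply: hM; exists s => //; congr eucl; apply/funext => i; rewrite /ev /= subr0.
Qed.

Lemma supn_ge0 (x : CC) : 0 <= supn x.
Proof. exact: le_trans (eucl_ge0 _) (eucl_le_supn x (Iint0 r0_gt0)). Qed.

Lemma maxnorm_le_supn (x : CC) : maxnorm x <= supn x.
Proof.
apply: maxnorm_le (supn_ge0 x) _ => i t It.
exact: le_trans (coord_le_eucl (fun i => ev x i t) i) (eucl_le_supn x It).
Qed.

Lemma sqr_supn_le (x : CC) : supn x ^+ 2 <= n%:R * maxnorm x ^+ 2.
Proof.
have M0 : 0 <= n%:R * maxnorm x ^+ 2 by rewrite mulr_ge0 ?sqr_ge0.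
rewrite -(sqr_sqrtr M0) lerXn2r ?nnegrE ?supn_ge0 ?sqrtr_ge0 //.
apply: ge_sup; first by exists (eucl (fun i => ev x i 0)), 0; first exact: Iint0.
move=> _ [t It <-]; rewrite -ler_sqr ?nnegrE ?eucl_ge0 ?sqrtr_ge0 // (sqr_sqrtr M0).
by apply: eucl_le => i; exact: ev_le_maxnorm.
Qed.

Lemma measurable_sqr_maxnorm : measurable_fun setT (fun x : CM => (maxnorm x ^+ 2)%:E).
Proof. by apply/measurable_EFinP; exact: measurable_funX measurable_maxnorm. Qed.

Lemma P2_maxnormP (Q : probability CM R) :
  P2 Q <-> (\int[Q]_x (maxnorm x ^+ 2)%:E < +oo)%E.
Proof.
split=> fin.
  apply: le_lt_trans fin; apply: ge0_le_integral_nomeas => x; rewrite lee_fin ?sqr_ge0 //.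
  by rewrite lerXn2r ?nnegrE ?maxnorm_ge0 ?supn_ge0 ?maxnorm_le_supn.
have supn_le : (\int[Q]_x (supn x ^+ 2)%:E
    <= \int[Q]_x (n%:R%:E * (maxnorm x ^+ 2)%:E))%E.
  apply: ge0_le_integral_nomeas => x; first by rewrite lee_fin sqr_ge0.
  by rewrite -EFinM lee_fin sqr_supn_le.
apply: le_lt_trans supn_le _.
rewrite ge0_integralZl //; [|exact: measurable_sqr_maxnorm|by move=> x _; rewrite lee_fin sqr_ge0].
exact: lte_mul_pinfty.
Qed.

End max_norm.

Lemma A5_lipschitz (R : realType) (n : nat) (r0 : R) (D : C n r0 -> 'I_n -> R) :
  A5 D -> exists2 k : R, 0 <= k < 1 &
    forall x y i, `|D x i - D y i| <= k * \big[Num.max/0]_j supdi j x y.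
Proof.
move=> [k /andP[k_gt0 k_lt1] D_lip]; exists k; first by rewrite ltW.
by move=> x y i; apply: le_trans (D_lip x y); exact: (coord_le_eucl (fun i => D x i - D y i)).
Qed.

Section D_lower_bounds.
Variables (R : realType) (n : nat) (r0 : R) (D : C n r0 -> 'I_n -> R) (k : R).
Hypothesis r0_gt0 : 0 < r0.
Hypotheses (k_ge0 : 0 <= k) (k_lt1 : k < 1).
Hypothesis D_lipschitz :
  forall x y i, `|D x i - D y i| <= k * \big[Num.max/0]_j supdi j x y.
Hypothesis D_monotone : forall x y, leC y x -> forall i, D y i <= D x i.
Local Notation CC := (C n r0).
Local Notation CM := (Cm n r0).

Lemma D_dist_le (x y : CC) i M :
  0 <= M -> (forall j, supdi j x y <= M) -> `|D x i - D y i| <= k * M.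
Proof. by move=> M0 xyM; rewrite (le_trans (D_lipschitz x y i)) // ler_wpM2l // bigmax_le. Qed.

Definition Dres_meet (x y : CC) i (s : R) : R := Dres D (meetC x y s) i.

Lemma Dres_meet_lipschitz (x y : CC) i s s' :
  `|Dres_meet x y i s - Dres_meet x y i s'| <= (1 + k) * `|s - s'|.
Proof.
have := D_dist_le i (normr_ge0 (s - s')) (supdi_meetC r0_gt0 x y s s').
rewrite /Dres_meet /Dres !ev_meetC; set d := D _ i - D _ i => dk.
rewrite (_ : _ - _ = - (s - s') - d); last by rewrite /d; ring.
by rewrite mulrDl mul1r (le_trans (ler_normB _ _)) // normrN lerD.
Qed.

Lemma Dres_meet_decay (x y : CC) i s :
  0 <= s -> Dres_meet x y i s <= Dres_meet x y i 0 - (1 - k) * s.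
Proof.
move=> s0; have := D_dist_le i (normr_ge0 (s - 0)) (supdi_meetC r0_gt0 x y s 0).
rewrite subr0 (ger0_norm s0) ler_norml => /andP[dk _].
rewrite /Dres_meet /Dres !ev_meetC; nra.
Qed.

Lemma Dres_meet0_ge (x y : CC) i :
  Dres D x i = Dres D y i -> Dres D x i <= Dres_meet x y i 0.
Proof.
move=> xy; rewrite /Dres_meet /Dres ev_meetC subr0.
have meet_le_x : leC (meetC x y 0) x by move=> j t _; rewrite ev_meetC subr0 ge_min lexx.
have meet_le_y : leC (meetC x y 0) y by move=> j t _; rewrite ev_meetC subr0 ge_min lexx orbT.
have := D_monotone meet_le_x i; have := D_monotone meet_le_y i.
move: xy; rewrite /Dres; case: (leP (ev x i 0) (ev y i 0)) => _; lra.
Qed.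

Lemma exists_lower_meet_Dres i (x y : CC) :
  Dres D x i = Dres D y i ->
  exists z : CC, le_meet z x y /\ Dres D z i = Dres D x i /\ Dres D z i = Dres D y i.
Proof.
move=> xy; set a := Dres D x i; set g := Dres_meet x y i.
have k1_gt0 : 0 < 1 + k by rewrite (lt_le_trans ltr01) // lerDl.
have g_cont : continuous g := lipschitz_continuous k1_gt0 (Dres_meet_lipschitz x y i).
have ag0 : a <= g 0 by exact: Dres_meet0_ge.
pose b := (g 0 - a) / (1 - k).
have b0 : 0 <= b by rewrite divr_ge0 // subr_ge0 // ltW.
have kb : (1 - k) * b = g 0 - a.
  by rewrite /b mulrC divfK // lt0r_neq0 // subr_gt0.
have gba : g b <= a by have := Dres_meet_decay x y i b0; rewrite -/g kb; lra.
have [c] : exists2 c, c \in `[0, b] & g c = a.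
  apply: IVT => //; first exact: continuous_subspaceT.
  by rewrite ge_min gba le_max ag0 orbT.
rewrite in_itv /= => /andP[c0 _] gca.
exists (meetC x y c); split; last by split; [|rewrite -xy].
by move=> j t _; rewrite ev_meetC lerBlDr lerDl.
Qed.

Definition growth : R := (1 + k) / (1 - k).

Lemma growth_ge0 : 0 <= growth.
Proof. by apply: divr_ge0; [rewrite addr_ge0 | rewrite subr_ge0 ltW]. Qed.

Lemma mulr_growth : (1 - k) * growth = 1 + k.
Proof. by rewrite mulrC divfK // lt0r_neq0 // subr_gt0. Qed.

Lemma cstC_leD (x : CC) (c : R) : growth * maxnorm x <= c -> leD D (cstC n r0 (- c)) x.
Proof.
move=> xc; have m0 := maxnorm_ge0 x.
have c0 : 0 <= c := le_trans (mulr_ge0 growth_ge0 m0) xc.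
have kxc : (1 + k) * maxnorm x <= (1 - k) * c.
  by rewrite -mulr_growth -mulrA ler_wpM2l // subr_ge0 ltW.
have mc : maxnorm x <= c by move: k_ge0 k_lt1 => ? ?; nra.
split=> [i t It | i].
  by have := ev_le_maxnorm r0_gt0 x i It; rewrite /ev /= ler_norml => /andP[+ _]; lra.
have dist_cst j : supdi j x (cstC n r0 (- c)) <= maxnorm x + c.
  apply: supdi_le => // t It; rewrite /ev /= opprK (le_trans (ler_normD _ _)) //.
  by rewrite (ger0_norm c0) lerD2r ev_le_maxnorm.
have := D_dist_le i (addr_ge0 m0 c0) dist_cst; rewrite ler_norml => /andP[_ Dk].
have := ev_le_maxnorm r0_gt0 x i (Iint0 r0_gt0); rewrite ler_norml => /andP[x0 _].
by move: x0 Dk; rewrite /Dres /ev /=; nra.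
Qed.

(* Rounding up to an integer makes the map below take countably many values,
   which reduces its measurability to that of maxnorm. *)
Definition level (p : CC * CC) : nat :=
  (truncn (growth * (maxnorm p.1 + maxnorm p.2))).+1.

Definition lower_cst (p : CM * CM) : CM := cstC n r0 (- (level p)%:R).

Lemma growth_maxnorm_ge0 (p : CC * CC) : 0 <= growth * (maxnorm p.1 + maxnorm p.2).
Proof. by rewrite mulr_ge0 ?growth_ge0 ?addr_ge0 ?maxnorm_ge0. Qed.

Lemma level_gt (p : CC * CC) : growth * (maxnorm p.1 + maxnorm p.2) < (level p)%:R.
Proof. exact: truncnS_gt. Qed.

Lemma level_le (p : CC * CC) : (level p)%:R <= growth * (maxnorm p.1 + maxnorm p.2) + 1.
Proof.
have /andP[+ _] := truncn_itv (growth_maxnorm_ge0 p).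
by rewrite /level -addn1 natrD lerD2r.
Qed.

Lemma lower_cst_leD_fst (p : CM * CM) : leD D (lower_cst p) p.1.
Proof.
apply/cstC_leD/ltW/le_lt_trans/level_gt.
by rewrite ler_wpM2l ?growth_ge0 // lerDl maxnorm_ge0.
Qed.

Lemma lower_cst_leD_snd (p : CM * CM) : leD D (lower_cst p) p.2.
Proof.
apply/cstC_leD/ltW/le_lt_trans/level_gt.
by rewrite ler_wpM2l ?growth_ge0 // lerDr maxnorm_ge0.
Qed.

Lemma measurable_level_eq (j : nat) : measurable [set p : CM * CM | level p = j].
Proof.
have mnorm := measurable_maxnorm (n := n) r0_gt0.
have mg : measurable_fun setT (fun p : CM * CM => growth * (maxnorm p.1 + maxnorm p.2)).
  apply: measurable_funM; first exact: measurable_cst.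
  by apply: measurable_funD; [exact: measurableT_comp mnorm measurable_fst
                            |exact: measurableT_comp mnorm measurable_snd].
case: j => [|j].
  by rewrite (_ : [set p | level p = 0]%N = set0) //; apply/seteqP; split.
rewrite (_ : [set p | level p = j.+1] = [set: CM * CM] `&`
    ((fun p : CM * CM => growth * (maxnorm p.1 + maxnorm p.2)) @^-1` `[j%:R, j.+1%:R[)).
  exact: mg measurableT _ (measurable_itv _).
apply/seteqP; split=> p /=.
  by move=> [<-]; rewrite in_itv /= -truncn_eq ?growth_maxnorm_ge0.
by move=> [_]; rewrite in_itv /= -truncn_eq ?growth_maxnorm_ge0 // => /eqP <-.
Qed.

Lemma measurable_lower_cst : measurable_fun [set: CM * CM] lower_cst.
Proof.
move=> _ B _; rewrite setTI.
rewrite (_ : lower_cst @^-1` B =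
    \bigcup_j ([set p | level p = j] `&` [set _ | B (cstC n r0 (- j%:R))])).
  apply: bigcupT_measurable => j; apply: measurableI; first exact: measurable_level_eq.
  by case: (pselect (B (cstC n r0 (- j%:R)))) => Bj;
    [rewrite (_ : [set _ | _] = setT) | rewrite (_ : [set _ | _] = set0)];
    rewrite //; apply/seteqP; split.
apply/seteqP; split=> p /=; first by move=> Bp; exists (level p).
by move=> [j _ [<-]].
Qed.

HB.instance Definition _ := isMeasurableFun.Build _ _ _ _ lower_cst measurable_lower_cst.

Lemma sqr_maxnorm_lower_cst_le (p : CM * CM) :
  maxnorm (lower_cst p) ^+ 2
    <= 3 * (growth ^+ 2 + 1) * (maxnorm p.1 ^+ 2 + maxnorm p.2 ^+ 2 + 1).
Proof.
have sL : maxnorm (lower_cst p) <= (level p)%:R.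
  by have := maxnorm_cstC n r0_gt0 (- (level p)%:R); rewrite normrN ger0_norm.
move: (le_trans sL (level_le p)) (maxnorm_ge0 (lower_cst p)).
move: (maxnorm_ge0 p.1) (maxnorm_ge0 p.2) growth_ge0.
set s := maxnorm (lower_cst p); set a := maxnorm p.1; set b := maxnorm p.2; set K := growth.
move=> a0 b0 K0 sK s0.
have s2 : s ^+ 2 <= (K * (a + b) + 1) ^+ 2.
  by apply: lerXn2r; rewrite ?nnegrE // addr_ge0 // mulr_ge0 // addr_ge0.
apply: le_trans s2 _.
have : (K * (a + b) + 1) ^+ 2 <= 3 * ((K * a) ^+ 2 + (K * b) ^+ 2 + 1).
  have := sqr_ge0 (K * a - K * b); have := sqr_ge0 (K * a - 1).
  have := sqr_ge0 (K * b - 1); rewrite !expr2; nra.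
move/le_trans; apply.
have := sqr_ge0 K; have := sqr_ge0 a; have := sqr_ge0 b; rewrite !expr2; nra.
Qed.

Section lower_distribution.
Variables mu nu : probability CM R.
Local Notation lower := (distribution (mu \x nu)%E lower_cst).

Lemma leDmeas_lower_fst : leDmeas D lower mu.
Proof.
move=> f [mf [M fM]] f_incr; rewrite -(integral_prod_fst mu nu mf fM).
apply: (le_integral_distribution _ measurable_fst mf fM) => p.
exact/f_incr/lower_cst_leD_fst.
Qed.

Lemma leDmeas_lower_snd : leDmeas D lower nu.
Proof.
move=> f [mf [M fM]] f_incr; rewrite -(integral_prod_snd mu nu mf fM).
apply: (le_integral_distribution _ measurable_snd mf fM) => p.
exact/f_incr/lower_cst_leD_snd.
Qed.

Lemma P2_lower : P2 mu -> P2 nu -> P2 lower.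
Proof.
move=> /(P2_maxnormP r0_gt0) mu2 /(P2_maxnormP r0_gt0) nu2; apply/(P2_maxnormP r0_gt0).
have msqr := measurable_sqr_maxnorm (n := n) r0_gt0.
have sqr0 (x : CM) : (0 <= (maxnorm x ^+ 2)%:E)%E by rewrite lee_fin sqr_ge0.
rewrite ge0_integral_distribution //.
pose c : R := 3 * (growth ^+ 2 + 1).
have c0 : 0 <= c by rewrite mulr_ge0 // addr_ge0 // sqr_ge0.
apply: (le_lt_trans (ge0_le_integral_nomeas (g := fun p : CM * CM =>
  (c%:E * ((maxnorm p.1 ^+ 2)%:E + (maxnorm p.2 ^+ 2)%:E + 1))%E) _ _ _)) => //.
- by move=> p; rewrite /= lee_fin sqr_ge0.
- by move=> p; rewrite /= -!EFinD -EFinM lee_fin sqr_maxnorm_lower_cst_le.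
have m1 := measurableT_comp msqr (measurable_fst (T1 := CM) (T2 := CM)).
have m2 := measurableT_comp msqr (measurable_snd (T1 := CM) (T2 := CM)).
have m12 := emeasurable_funD m1 m2.
rewrite ge0_integralZl //; last 2 first.
- exact: emeasurable_funD m12 (measurable_cst _).
- by move=> p _; rewrite !adde_ge0 ?sqr0.
apply: lte_mul_pinfty => //.
rewrite ge0_integralD //; [|by move=> p _; rewrite !adde_ge0 ?sqr0].
rewrite ge0_integralD // (ge0_integral_prod_fst mu nu msqr sqr0).
rewrite (ge0_integral_prod_snd mu nu msqr sqr0).
rewrite integral_cst // mul1e; apply: lte_add_pinfty; first exact: lte_add_pinfty.
exact: le_lt_trans (probability_le1 _ measurableT) (ltry 1).
Qed.

End lower_distribution.

Lemma exists_lower_measure (mu nu : probability CM R) : P2 mu -> P2 nu ->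
  exists mu' : probability CM R, P2 mu' /\ leDmeas D mu' mu /\ leDmeas D mu' nu.
Proof.
move=> mu2 nu2; exists (distribution (mu \x nu)%E lower_cst).
by split; [exact: P2_lower | split; [exact: leDmeas_lower_fst | exact: leDmeas_lower_snd]].
Qed.

End D_lower_bounds.

Theorem lemma4p3 (R : realType) (n : nat) (r0 : R) (D : C n r0 -> 'I_n -> R) :
  (0 < n)%N -> 0 < r0 -> A1 D -> A5 D ->
  (forall (i : 'I_n) (x y : C n r0), Dres D x i = Dres D y i ->
     exists z : C n r0, le_meet z x y /\ Dres D z i = Dres D x i /\ Dres D z i = Dres D y i)
  /\
  (forall mu nu : probability (Cm n r0) R, P2 mu -> P2 nu ->
     exists mu' : probability (Cm n r0) R, P2 mu' /\ leDmeas D mu' mu /\ leDmeas D mu' nu).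
Proof.
move=> _ r0_gt0 [_ D_monotone] /A5_lipschitz [k /andP[k_ge0 k_lt1] D_lip]; split.
  by move=> i x y; exact: exists_lower_meet_Dres r0_gt0 k_ge0 k_lt1 D_lip D_monotone i x y.
by move=> mu nu; exact: exists_lower_measure r0_gt0 k_ge0 k_lt1 D_lip mu nu.
Qed.
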